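(* Let $\Gamma^{\mathsf b}$ be a base game. There exists $\delta>0$ such that for every $\varepsilon\in(0,\delta)$, in the money-burning $\varepsilon$-game $\Gamma^{\mathsf{mb}}[\varepsilon]$ one has $\zeta(\mathbb U^\infty(S))=\{((0,a^*_{\mathrm a}),a^*_{\mathrm b})\}$, i.e., every strategy profile surviving Iterative Conditional B-Dominance leads to Ann burning nothing and the profile $(a^*_{\mathrm a},a^*_{\mathrm b})$ being played.
   Context: Base game: a two-player strategic game $\Gamma^{\mathsf b}=\langle\{\mathrm a,\mathrm b\},(A_j,v_j)_{j}\rangle$ with finite action sets $A_{\mathrm a},A_{\mathrm b}$ and utility functions $v_j:A_{\mathrm a}\times A_{\mathrm b}\to\mathbb R$, for which there exist $a^*_{\mathrm a}\in A_{\mathrm a}$, $a^*_{\mathrm b}\in A_{\mathrm b}$ with $v_{\mathrm a}(a^*_{\mathrm a},a^*_{\mathrm b})>v_{\mathrm a}(a_{\mathrm a},a_{\mathrm b})$ for every $(a_{\mathrm a},a_{\mathrm b})\neq(a^*_{\mathrm a},a^*_{\mathrm b})$, and $v_{\mathrm b}(a^*_{\mathrm a},a^*_{\mathrm b})>v_{\mathrm b}(a^*_{\mathrm a},a_{\mathrm b})$ for every $a_{\mathrm b}\neq a^*_{\mathrm b}$. Money-burning $\varepsilon$-game ($\varepsilon>0$): Ann first publicly chooses $n\in\mathbb N=\{0,1,2,\dots\}$ (burning $\varepsilon n$), then Ann and Bob simultaneously play the base game. Ann's strategies are $S_{\mathrm a}=\mathbb N\times A_{\mathrm a}$, Bob's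 are $S_{\mathrm b}=A_{\mathrm b}^{\mathbb N}$ (functions $s_{\mathrm b}:\mathbb N\to A_{\mathrm b}$), $S=S_{\mathrm a}\times S_{\mathrm b}$; the outcome of $((n,a_{\mathrm a}),s_{\mathrm b})$ is $\zeta((n,a_{\mathrm a}),s_{\mathrm b})=((n,a_{\mathrm a}),s_{\mathrm b}(n))$; Ann's preference over outcomes is represented by $((n,a_{\mathrm a}),a_{\mathrm b})\mapsto v_{\mathrm a}(a_{\mathrm a},a_{\mathrm b})-\varepsilon n$ and Bob's by $((n,a_{\mathrm a}),a_{\mathrm b})\mapsto v_{\mathrm b}(a_{\mathrm a},a_{\mathrm b})$ (write $\succsim_j,\succ_j$). Information sets: Ann has the root (reached by all profiles) and, for each $n$, the history $n$; Bob has, for each $n\in\mathbb N$, the history $n$. The profiles reaching history $n$ are $(\{n\}\times A_{\mathrm a})\times S_{\mathrm b}$. For a restriction $R=R_{\mathrm a}\times R_{\mathrm b}\subseteq S$ (nonempty) and an information set $h$ of player $i$ that strategy $s_i$ reaches, let $R^i(h)=R_i(h)\times R_{-i}(h)$ be the profiles in $R$ reaching $h$. Dominance: for $P=P_i\times P_{-i}$, $s_i\in P_i$ is weakly dominated relative to $P$ by $t_i\in P_i$ if $\zeta(t_i,s_{-i})\succsim_i\zeta(s_i,s_{-i})$ for all $s_{-i}\in P_{-i}$ with $\succ_i$ for some; B-dominated w.r.t. $P$ if for every nonempty $Q_{-i}\subseteq P_{-i}$ it is weakly dominated relative to $P_i\times Q_{-i}$ by some strategy in $P_i$. $s_i\in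 R_i$ is conditionally B-dominated w.r.t. $R$ if for some information set $h$ of $i$ reached by $s_i$ with $R^i(h)\ne\emptyset$, $s_i$ is B-dominated w.r.t. $R^i(h)$. $\mathbb U_i(R)$ is the set of $s_i\in R_i$ not conditionally B-dominated w.r.t. $R$, $\mathbb U(R)=\mathbb U_{\mathrm a}(R)\times\mathbb U_{\mathrm b}(R)$; $\mathbb U^0(S)=S$, $\mathbb U^n(S)=\mathbb U(\mathbb U^{n-1}(S))$, $\mathbb U^\infty(S)=\bigcap_{\ell\ge0}\mathbb U^\ell(S)$. *)

From mathcomp Require Import all_boot.
From Stdlib Require Import Reals.
Set Implicit Arguments.
Unset Strict Implicit.
Unset Printing Implicit Defensive.
Local Open Scope R_scope.

Definition wdominated {X Y : Type} (u : X -> Y -> R)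
  (P : X -> Prop) (Q : Y -> Prop) (s t : X) : Prop :=
  P t /\ (forall y, Q y -> u s y <= u t y) /\ (exists y, Q y /\ u s y < u t y).

Definition Bdominated {X Y : Type} (u : X -> Y -> R)
  (P : X -> Prop) (Q : Y -> Prop) (s : X) : Prop :=
  P s /\
  forall Q' : Y -> Prop, (exists y, Q' y) -> (forall y, Q' y -> Q y) ->
    exists t, wdominated u P Q' s t.

Definition SA (A : finType) : Type := (nat * A)%type.
Definition SB (B : finType) : Type := nat -> B.

Definition zeta {A B : finType} (sa : SA A) (sb : SB B) : (SA A * B)%type :=
  (sa, sb (fst sa)).

Definition uAnn {A B : finType} (va : A -> B -> R) (eps : R)
  (sa : SA A) (sb : SB B) : R :=
  va (snd (fst (zeta sa sb))) (snd (zeta sa sb)) - eps * INR (fst sa).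
Definition uBob {A B : finType} (vb : A -> B -> R)
  (sb : SB B) (sa : SA A) : R :=
  vb (snd (fst (zeta sa sb))) (snd (zeta sa sb)).

(* Histories: [None] = the root, [Some n] = history n (Ann burnt n).
   Ann's information sets: all histories; Bob's: [Some n] for n in nat. *)
Definition reaches {A B : finType} (h : option nat) (sa : SA A) (sb : SB B) : Prop :=
  match h with None => True | Some n => fst sa = n end.

Definition restr (A B : finType) : Type := ((SA A -> Prop) * (SB B -> Prop))%type.

Definition RA_h {A B : finType} (Rr : restr A B) (h : option nat) : SA A -> Prop :=
  fun x => Rr.1 x /\ exists y, Rr.2 y /\ reaches h x y.
Definition RB_h {A B : finType} (Rr : restr A B) (h : option nat) : SB B -> Prop :=
  fun y => Rr.2 y /\ exists x, Rr.1 x /\ reaches h x y.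

Definition Rh_nonempty {A B : finType} (Rr : restr A B) (h : option nat) : Prop :=
  exists x y, Rr.1 x /\ Rr.2 y /\ reaches h x y.

Definition condBdomA {A B : finType} (va : A -> B -> R) (eps : R)
  (Rr : restr A B) (s : SA A) : Prop :=
  exists h : option nat,
    (exists y : SB B, reaches h s y) /\ Rh_nonempty Rr h /\
    Bdominated (uAnn va eps) (RA_h Rr h) (RB_h Rr h) s.

Definition condBdomB {A B : finType} (vb : A -> B -> R)
  (Rr : restr A B) (s : SB B) : Prop :=
  exists n : nat,
    (exists x : SA A, reaches (Some n) x s) /\ Rh_nonempty Rr (Some n) /\
    Bdominated (uBob vb) (RB_h Rr (Some n)) (RA_h Rr (Some n)) s.

Definition Uop {A B : finType} (va vb : A -> B -> R) (eps : R)
  (Rr : restr A B) : restr A B :=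
  (fun s => Rr.1 s /\ ~ condBdomA va eps Rr s,
   fun s => Rr.2 s /\ ~ condBdomB vb Rr s).

Definition fullS (A B : finType) : restr A B := (fun _ => True, fun _ => True).

Fixpoint Uiter {A B : finType} (va vb : A -> B -> R) (eps : R) (k : nat) : restr A B :=
  match k with
  | 0 => fullS A B
  | k'.+1 => Uop va vb eps (Uiter va vb eps k')
  end.

Definition Uinf {A B : finType} (va vb : A -> B -> R) (eps : R) : restr A B :=
  (fun s => forall k, (Uiter va vb eps k).1 s,
   fun s => forall k, (Uiter va vb eps k).2 s).

(* Ann can always keep (0, aA): Bob's only undominated answer to it is aB, and
   (aA, aB) is Ann's best outcome.  Say Ann secures L at stage k if one of her
   surviving strategies earns at least L against all of Bob's surviving ones;
   (0, aA) alone secures min_b va aA b >= va aA aB - eps n0 for n0 large.  If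
   va aA aB - eps (n+1) is secured, burning n and then deviating from aA costs
   the gap g > eps, so such strategies are eliminated; then either (n, aA) is
   eliminated too, which requires something doing as well as its value
   va aA aB - eps n, or Bob must answer aB after n and (n, aA) secures that
   value.  Descending to n = 0, va aA aB itself is secured, and this strictly
   dominates every strategy of Ann other than (0, aA). *)

From mathcomp Require Import all_boot.
From Stdlib Require Import Reals Lra Classical IndefiniteDescription.
Set Implicit Arguments.
Unset Strict Implicit.
Unset Printing Implicit Defensive.
Local Open Scope R_scope.

Lemma exists_max_fin (T : finType) (f : T -> R) (P : T -> Prop) :
  (exists x, P x) -> exists x, P x /\ forall y, P y -> f y <= f x.
Proof.
move=> [x0 Px0].
suff [x [Px max_x]] : exists x, P x /\ forall y, y \in enum T -> P y -> f y <= f x.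
  by exists x; split=> // y; apply: max_x; rewrite mem_enum.
elim: (enum T) => [|a s [z [Pz max_z]]]; first by exists x0.
have [[Pa lt_za] | not_a] := classic (P a /\ f z < f a).
- exists a; split=> // y; rewrite inE => /predU1P [-> _|/max_z le_yz /le_yz]; lra.
- exists z; split=> // y; rewrite inE => /predU1P [-> Pa|/max_z //].
  by apply: Rnot_lt_le => lt_za; apply: not_a.
Qed.

Lemma nested_nonempty_fin (T : finType) (Q : nat -> T -> Prop) :
  (forall k x, Q k.+1 x -> Q k x) -> (forall k, exists x, Q k x) ->
  exists x, forall k, Q k x.
Proof.
move=> QS Qne; apply: NNPP => no_x.
have QW (j k : nat) x : (j <= k)%nat -> Q k x -> Q j x.
  by move=> /subnK <-; elim: (k - j)%nat => //= d IHd /QS.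
have dies x : exists k, ~ Q k x.
  apply: NNPP => all_k; apply: no_x; exists x => k.
  by apply: NNPP => nQ; apply: all_k; exists k.
have [K dead] : exists K, forall x, x \in enum T -> ~ Q K x.
  elim: (enum T) => [|a s [K dead]]; first by exists 0%nat.
  have [ka Hka] := dies a.
  exists (maxn K ka) => x; rewrite inE => /predU1P [->|/dead ndx] /QW Qx.
  - by apply/Hka/Qx/leq_maxr.
  - by apply/ndx/Qx/leq_maxl.
have [x Qx] := Qne K.
by apply: (dead x); rewrite ?mem_enum.
Qed.

Lemma Bdominated_single {X Y : Type} (u : X -> Y -> R) P Q s y :
  Bdominated u P Q s -> Q y -> exists2 t, P t & u s y < u t y.
Proof.
move=> [_ dom] Qy.
have sub y' : y' = y -> Q y' by move->.
by have [t [Pt [_ [y' [-> lt_st]]]]] := dom _ (ex_intro _ y erefl) sub; exists t.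
Qed.

Lemma Bdominated_strict {X Y : Type} (u : X -> Y -> R) (P : X -> Prop) Q s t :
  P s -> P t -> (forall y, Q y -> u s y < u t y) -> Bdominated u P Q s.
Proof.
move=> Ps Pt lt_st; split=> // Q' [y Q'y] sQ'Q; exists t; split=> //; split.
- by move=> y' /sQ'Q /lt_st /Rlt_le.
- by exists y; split=> //; apply/lt_st/sQ'Q.
Qed.

Definition set_at {B : finType} (y : SB B) (n : nat) (b : B) : SB B :=
  fun m => if m == n then b else y m.

Lemma set_at_eq {B : finType} (y : SB B) n b : set_at y n b n = b.
Proof. by rewrite /set_at eqxx. Qed.

Lemma set_at_neq {B : finType} (y : SB B) n b m : m <> n -> set_at y n b m = y m.
Proof. by rewrite /set_at => /eqP /negbTE ->. Qed.

Section Survivors.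

Variables (A B : finType) (va vb : A -> B -> R) (eps : R).

Local Notation X k := (Uiter va vb eps k).1.
Local Notation Y k := (Uiter va vb eps k).2.

Lemma uAnnE x y : uAnn va eps x y = va x.2 (y x.1) - eps * INR x.1.
Proof. by []. Qed.

Lemma uBobE y x : uBob vb y x = vb x.2 (y x.1).
Proof. by []. Qed.

(* Bob's payoff at history [m] only depends on the action [y m]. *)
Lemma BdomB_transfer (Rr : restr A B) m y y' :
  Rr.2 y' -> y' m = y m ->
  Bdominated (uBob vb) (RB_h Rr (Some m)) (RA_h Rr (Some m)) y ->
  Bdominated (uBob vb) (RB_h Rr (Some m)) (RA_h Rr (Some m)) y'.
Proof.
move=> Ry' eq_m [[_ [x [Rx reach_x]]] dom]; split; first by split=> //; exists x.
move=> Q' Q'ne sQ'R; have [t [Pt [le_yt [x0 [Q'x0 lt_yt]]]]] := dom Q' Q'ne sQ'R.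
have at_m x1 : Q' x1 -> x1.1 = m by move=> /sQ'R [_ [? []]].
exists t; split=> //; split.
- by move=> x1 Q'x1; have := le_yt x1 Q'x1; rewrite !uBobE (at_m _ Q'x1) eq_m.
- by exists x0; split=> //; move: lt_yt; rewrite !uBobE (at_m _ Q'x0) eq_m.
Qed.

Lemma survivesB_pointwise k y :
  (forall m, exists2 y', Y k y' & y' m = y m) -> Y k y.
Proof.
elim: k y => [//|k IHk] y Yk; split.
  by apply: IHk => m; have [y' [Yy' _] eq_m] := Yk m; exists y'.
move=> [m [_ [ne_m domy]]]; have [y' [Yy' undom_y'] eq_m] := Yk m.
apply: undom_y'; exists m; split; last split=> //.
- by case: ne_m => x [y0 [_ [_ reach_x]]]; exists x.
- exact: (BdomB_transfer Yy' eq_m domy).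
Qed.

Lemma survivesB_set_at k y y' n :
  Y k y -> Y k y' -> Y k (set_at y n (y' n)).
Proof.
move=> Yy Yy'; apply: survivesB_pointwise => m.
have [->|ne] := eqVneq m n; first by exists y'; rewrite ?set_at_eq.
by exists y; rewrite ?set_at_neq //; apply/eqP.
Qed.

Lemma survivorsB_nonempty (b0 : B) k : exists y, Y k y.
Proof.
elim: k => [|k [y0 Yy0]]; first by exists (fun _ => b0).
(* At every history Bob picks a best reply, among the actions still available
   there, to one surviving action of Ann at that history. *)
pose best m b := (exists2 y', Y k y' & y' m = b) /\
  ((exists a, X k (m, a)) ->
   exists2 a0, X k (m, a0) & forall y', Y k y' -> vb a0 (y' m) <= vb a0 b).
have [f best_f] : exists f, forall m, best m (f m).
  apply: functional_choice => m.
  have [[a0 Xa0]|none] := classic (exists a, X k (m, a)).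
  - have [b [[y1 Yy1 <-] max_b]] := exists_max_fin (vb a0)
      (P := fun b => exists2 y', Y k y' & y' m = b) (ex_intro _ _ (ex_intro2 _ _ y0 Yy0 erefl)).
    exists (y1 m); split; first by exists y1.
    by move=> _; exists a0 => // y' Yy'; apply: max_b; exists y'.
  - by exists (y0 m); split; [exists y0 | move=> /none].
exists f; split; first by apply: survivesB_pointwise => m; have [] := best_f m.
move=> [m [_ [[x [y1 [Xx [Yy1 reach_x]]]] domf]]].
have [_ /(_ (ex_intro _ x.2 _)) [|a0 Xa0 max_f]] := best_f m.
  by rewrite -reach_x -surjective_pairing.
have [t [Yt _]] := Bdominated_single domf (conj Xa0 (ex_intro _ y1 (conj Yy1 erefl))).
by rewrite !uBobE /=; have := max_f t Yt; lra.
Qed.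

Lemma strictly_dominated_eliminated (b0 : B) k s t :
  X k s -> X k t -> (forall y, Y k y -> uAnn va eps s y < uAnn va eps t y) ->
  ~ X k.+1 s.
Proof.
move=> Xs Xt lt_st [_ []]; have [y0 Yy0] := survivorsB_nonempty b0 k.
exists None; split; first by exists y0.
split; first by exists s, y0.
apply: (Bdominated_strict (t := t)) => [| |y [/lt_st //]]; by split=> //; exists y0.
Qed.

Lemma elimination_round s K :
  ~ X K s -> exists j, X j s /\ ~ X j.+1 s.
Proof.
elim: K => [|K IHK] nXs; first by case: nXs.
by have [Xs|/IHK] := classic (X K s); first by exists K.
Qed.

Lemma survivorB_forever m0 b :
  (forall k, exists2 y, Y k y & y m0 = b) ->
  exists y, (forall k, Y k y) /\ y m0 = b.
Proof.
move=> at_m0.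
have stable m : exists b', (m = m0 -> b' = b) /\ forall k, exists2 y, Y k y & y m = b'.
  have [->|ne] := eqVneq m m0; first by exists b.
  have [b' all_k] : exists b', forall k, exists2 y, Y k y & y m = b'.
    apply: (nested_nonempty_fin (Q := fun k b' => exists2 y, Y k y & y m = b')).
      by move=> k _ [y [Yy _] <-]; exists y.
    by move=> k; have [y Yy] := survivorsB_nonempty b k; exists (y m), y.
  by exists b'; split=> // eq_m; move: ne; rewrite eq_m eqxx.
have [f f_stable] := functional_choice _ stable.
exists f; split; last exact: (f_stable m0).1.
by move=> k; apply: survivesB_pointwise => m; apply: (f_stable m).2.
Qed.

End Survivors.

Lemma exists_gap (A B : finType) (va : A -> B -> R) (aA : A) (aB : B) :
  (forall a b, (a, b) <> (aA, aB) -> va a b < va aA aB) ->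
  exists2 g, 0 < g & forall a b, a <> aA -> va a b <= va aA aB - g.
Proof.
move=> top_va.
have [[p ne1]|none] := classic (exists p : A * B, p <> (aA, aB)); last first.
  by exists 1 => [|a b ne]; [lra | case: none; exists (a, b); case].
have [[a2 b2] [ne2 max2]] := exists_max_fin (fun p : A * B => va p.1 p.2)
  (ex_intro (fun p => p <> (aA, aB)) _ ne1).
exists (va aA aB - va a2 b2) => [|a b ne]; first by have := top_va _ _ ne2; lra.
have /max2 /= : (a, b) <> (aA, aB) by case.
lra.
Qed.

Section BurningGame.

Variables (A B : finType) (va vb : A -> B -> R) (eps : R) (aA : A) (aB : B).
Hypothesis top_va : forall a b, (a, b) <> (aA, aB) -> va a b < va aA aB.
Hypothesis best_vb : forall b, b <> aB -> vb aA b < vb aA aB.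
Hypothesis eps_gt0 : 0 < eps.

Local Notation X k := (Uiter va vb eps k).1.
Local Notation Y k := (Uiter va vb eps k).2.
Local Notation top := (va aA aB).

Lemma va_le_top a b : va a b <= top.
Proof.
have [[-> ->]|ne] := classic ((a, b) = (aA, aB)); first exact: Rle_refl.
exact/Rlt_le/top_va.
Qed.

Lemma survivorB_best_at k n : X k (n, aA) -> exists2 y, Y k y & y n = aB.
Proof.
elim: k => [|k IHk] Xn; first by exists (fun _ => aB).
have [y1 Yy1 y1n] := IHk Xn.1.
have [y0 [Yy0 undom_y0]] := survivorsB_nonempty va vb eps aB k.+1.
exists (set_at y0 n aB); last exact: set_at_eq.
split; first by rewrite -y1n; apply: survivesB_set_at.
move=> [m [_ [ne_m dom]]]; case: (eqVneq m n) ne_m dom => [-> _|mn ne_m] dom.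
  have [t [Yt _]] := Bdominated_single dom (conj Xn.1 (ex_intro _ y1 (conj Yy1 erefl))).
  rewrite !uBobE /= set_at_eq; have [->|/best_vb] := classic (t n = aB); lra.
apply: undom_y0; exists m; split; last split=> //.
  by case: ne_m => x [y2 [_ [_ reach_x]]]; exists x.
by apply: BdomB_transfer dom; rewrite // set_at_neq //; apply/eqP.
Qed.

Lemma survivesA_zero_top k : X k (0%nat, aA).
Proof.
elim: k => [//|k IHk]; split=> // [[h [[y0 reach0] [_ dom]]]].
have [y1 Yy1 y10] := survivorB_best_at IHk.
have reach_h : reaches h (0%nat, aA) y1 by case: h reach0 dom.
have [t _] := Bdominated_single dom (conj Yy1 (ex_intro _ _ (conj IHk reach_h))).
rewrite !uAnnE /= y10 Rmult_0_r.
have := va_le_top t.2 (y1 t.1); have := pos_INR t.1; nra.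
Qed.

Definition guarantees k L :=
  exists2 t, X k t & forall y, Y k y -> L <= uAnn va eps t y.

Lemma eliminated_top_guarantees k m :
  X k (m, aA) -> ~ X k.+1 (m, aA) -> guarantees k (top - eps * INR m).
Proof.
move=> Xm nXm; have [h [[y0 reach0] [_ dom]]] : condBdomA va eps (Uiter va vb eps k) (m, aA).
  by apply: NNPP => undom; apply: nXm.
have [y1 Yy1 y1m] := survivorB_best_at Xm.
have inRB y : Y k y -> RB_h (Uiter va vb eps k) h y.
  by move=> Yy; split=> //; exists (m, aA); split=> //; case: h reach0 dom.
(* Test against Bob's survivors that answer [m] with [aB]. *)
have [t [[Xt _] [le_mt [y2 [[_ y2m] lt_mt]]]]] :=
  dom.2 (fun y => RB_h (Uiter va vb eps k) h y /\ y m = aB)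
    (ex_intro _ y1 (conj (inRB _ Yy1) y1m)) (fun y H => H.1).
exists t => // y Yy; have [tm|tm] := eqVneq t.1 m.
  move: lt_mt; rewrite !uAnnE /= tm y2m; have := va_le_top t.2 aB; lra.
have Yy' : Y k (set_at y m aB) by rewrite -y1m; apply: survivesB_set_at.
have := le_mt _ (conj (inRB _ Yy') (set_at_eq _ _ _)).
by rewrite !uAnnE /= set_at_eq set_at_neq //; apply/eqP.
Qed.

Lemma survivorsB_best_reply k n :
  (forall a, X k (n, a) -> a = aA) -> X k (n, aA) ->
  forall y, Y k.+1 y -> y n = aB.
Proof.
move=> only_aA Xn y [Yy undom_y]; apply: NNPP => yn; apply: undom_y.
have [y1 Yy1 y1n] := survivorB_best_at Xn.
have Yy' : Y k (set_at y n aB) by rewrite -y1n; apply: survivesB_set_at.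
exists n; split; first by exists (n, aA).
split; first by exists (n, aA), y.
apply: (Bdominated_strict (t := set_at y n aB)) => [| |[n' a] [Xa [y2 [_ /= nn]]]].
- by split=> //; exists (n, aA).
- by split=> //; exists (n, aA).
- by subst n'; rewrite !uBobE /= set_at_eq (only_aA _ Xa); apply: best_vb.
Qed.

Section Gap.

Variable g : R.
Hypothesis gap : forall a b, a <> aA -> va a b <= top - g.
Hypothesis eps_lt_gap : eps < g.

(* If Ann can secure [top - eps (n+1)], burning [n] and then deviating from
   [aA] is strictly dominated, so either [(n, aA)] is eliminated or Bob is
   forced to answer it with [aB]; both ways [top - eps n] becomes secured. *)
Lemma guarantee_step k n :
  guarantees k (top - eps * INR n.+1) -> exists k', guarantees k' (top - eps * INR n).
Proof.
move=> [t Xt t_secures].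
have [Xn|nXn] := classic (X k.+1 (n, aA)); last first.
  have [j [Xj nXj]] := elimination_round nXn.
  by exists j; apply: eliminated_top_guarantees.
have only_aA a : X k.+1 (n, a) -> a = aA.
  move=> Xa; apply: NNPP => ne; apply: (strictly_dominated_eliminated aB Xa.1 Xt _ Xa).
  move=> y Yy; have := t_secures y Yy; have := @gap _ (y n) ne.
  rewrite !uAnnE S_INR /=; lra.
have [Xn2|nXn2] := classic (X k.+2 (n, aA)).
  exists k.+2; exists (n, aA) => // y Yy.
  by rewrite uAnnE /= (survivorsB_best_reply only_aA Xn Yy); apply: Rle_refl.
by exists k.+1; apply: eliminated_top_guarantees.
Qed.

Lemma guarantee_top n :
  (exists k, guarantees k (top - eps * INR n)) -> exists k, guarantees k top.
Proof.
elim: n => [|n IHn] [k secured].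
  by exists k; rewrite Rmult_0_r Rminus_0_r in secured.
by apply/IHn/(guarantee_step secured).
Qed.

Lemma guarantee_top_eventually : exists k, guarantees k top.
Proof.
have [bm [_ min_bm]] := exists_max_fin (fun b => - va aA b) (ex_intro (fun _ => True) aB I).
have [n0 large] := INR_archimed eps (top - va aA bm) eps_gt0.
apply: (guarantee_top (n := n0)); exists 0%nat, (0%nat, aA) => // y _.
by rewrite uAnnE /= Rmult_0_r; have := min_bm (y 0%nat) I; lra.
Qed.

Lemma guarantee_top_isolates k :
  guarantees k top -> forall s, X k.+1 s -> s = (0%nat, aA).
Proof.
move=> [t Xt t_secures] [m a] Xs; apply: NNPP => ne.
apply: (strictly_dominated_eliminated aB Xs.1 Xt _ Xs) => y Yy.
have := t_secures y Yy; rewrite !uAnnE /=.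
have eps_m : 0 <= eps * INR m by apply/Rmult_le_pos/pos_INR; lra.
have [ea | /(@gap _ (y m))] := classic (a = aA); last lra.
subst a.
case: m Xs ne eps_m => [_ []//|m] _ _ _.
have := va_le_top aA (y m.+1); have := lt_0_INR m.+1 (Nat.lt_0_succ m); nra.
Qed.

Lemma survivors_outcome sa sb :
  (forall k, X k sa) -> (forall k, Y k sb) -> zeta sa sb = ((0%nat, aA), aB).
Proof.
move=> Xsa Ysb; have [K top_K] := guarantee_top_eventually.
have only_aA a : X K.+1 (0%nat, a) -> a = aA by move=> /(guarantee_top_isolates top_K) [].
rewrite (guarantee_top_isolates top_K (Xsa K.+1)) /zeta /=.
by rewrite (survivorsB_best_reply only_aA (survivesA_zero_top _) (Ysb K.+2)).
Qed.

End Gap.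

Lemma exists_survivorB_top : exists y, (forall k, Y k y) /\ y 0%nat = aB.
Proof.
by apply: survivorB_forever => k; apply/survivorB_best_at/survivesA_zero_top.
Qed.

End BurningGame.

Theorem proposition10 (A B : finType) (va vb : A -> B -> R)
  (aA : A) (aB : B)
  (hA : forall (a : A) (b : B), (a, b) <> (aA, aB) -> (va a b < va aA aB)%R)
  (hB : forall b : B, b <> aB -> (vb aA b < vb aA aB)%R) :
  exists delta : R, (0 < delta)%R /\
    forall eps : R, (0 < eps)%R -> (eps < delta)%R ->
      forall o : (SA A * B)%type,
        (exists (sa : SA A) (sb : SB B),
            (Uinf va vb eps).1 sa /\ (Uinf va vb eps).2 sb /\ zeta sa sb = o)
        <-> o = ((0%nat, aA), aB).
Proof.
have [g g_gt0 gap] := exists_gap hA.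
exists g; split=> // eps eps_gt0 eps_lt_g o; split.
  move=> [sa [sb [Xsa [Ysb <-]]]].
  by apply: (survivors_outcome hA hB eps_gt0 gap eps_lt_g); [exact: Xsa | exact: Ysb].
move=> ->; have [sb [Ysb sb0]] := exists_survivorB_top (vb := vb) hA hB eps_gt0.
exists (0%nat, aA), sb; split; first exact: survivesA_zero_top hA hB eps_gt0.
by rewrite /zeta sb0.
Qed.
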